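(* Let $L$ be a distributive lattice with generated Boolean algebra $B$, $n\ge1$, $a_i,b_i\in L$ with $a_i<b_i$ for $i\in[n]$, $\widehat{\mathbf e}_I\in L^n$ ($I\subseteq[n]$) the tuple with $i$-th component $b_i$ if $i\in I$ and $a_i$ otherwise, $D=\{\widehat{\mathbf e}_I:I\subseteq[n]\}$, and $f\colon D\to L$ monotone and satisfying $$f(\widehat{\mathbf e}_{I\cup\{k\}})\wedge a_k\le f(\widehat{\mathbf e}_I)\le f(\widehat{\mathbf e}_{I\setminus\{k\}})\vee b_k\quad\text{for all } I\subseteq[n],\ k\in[n].$$ Then $p^-(\widehat{\mathbf e}_J)\ge f(\widehat{\mathbf e}_J)$ for all $J\subseteq[n]$.
   Context: $B$ is the Boolean algebra generated by $L$ (with $L$ embedded), with complement $x\mapsto x'$. $f$ monotone means $I\subseteq J\Rightarrow f(\widehat{\mathbf e}_I)\le f(\widehat{\mathbf e}_J)$. Define $c_I^-=f(\widehat{\mathbf e}_I)\wedge\bigwedge_{i\notin I}a_i'\in B$ and $p^-(\mathbf x)=\bigvee_{I\subseteq[n]}(c_I^-\wedge\bigwedge_{i\in I}x_i)$, a polynomial function over $B$. *)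

From HB Require Import structures.
From mathcomp Require Import all_boot all_order.
Set Implicit Arguments. Unset Strict Implicit. Unset Printing Implicit Defensive.
Import Order.Theory.
Local Open Scope order_scope.

Definition generates (dB : Order.disp_t) (B : ctbDistrLatticeType dB) (T : Type)
  (e : T -> B) : Prop :=
  forall S : {pred B},
    (forall x, e x \in S) -> \bot \in S -> \top \in S ->
    (forall x y, x \in S -> y \in S -> x `&` y \in S) ->
    (forall x y, x \in S -> y \in S -> x `|` y \in S) ->
    (forall x, x \in S -> ~` x \in S) ->
    forall x, x \in S.

Definition ehat (dL : Order.disp_t) (L : porderType dL) (n : nat)
  (a b : 'I_n -> L) (I : {set 'I_n}) : 'I_n -> L :=
  fun i => if i \in I then b i else a i.

Definition cminus (dL : Order.disp_t) (L : porderType dL)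
  (dB : Order.disp_t) (B : ctbDistrLatticeType dB) (e : L -> B) (n : nat)
  (a b : 'I_n -> L) (f : ('I_n -> L) -> L) (I : {set 'I_n}) : B :=
  e (f (ehat a b I)) `&` \meet_(i | i \notin I) ~` (e (a i)).

Definition pminus (dL : Order.disp_t) (L : porderType dL)
  (dB : Order.disp_t) (B : ctbDistrLatticeType dB) (e : L -> B) (n : nat)
  (a b : 'I_n -> L) (f : ('I_n -> L) -> L) (x : 'I_n -> B) : B :=
  \join_(I : {set 'I_n}) (cminus e a b f I `&` \meet_(i in I) x i).

From HB Require Import structures.
From mathcomp Require Import all_boot all_order.
Import Order.Theory.
Set Implicit Arguments. Unset Strict Implicit. Unset Printing Implicit Defensive.
Local Open Scope order_scope.

(* Expand e(f(ê_J)) into minterms over x_i := e((ê_J)_i).  The minterm with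
   positive part S lies below the S-th summand of p^-(ê_J): its positive
   literals give the meet of the x_i over S; its negative literals give the
   complements of the a_i outside S, since a_i <= x_i; and for i in J \ S,
   where x_i = e(b_i), the negative literals let the upper half of the
   hypothesis on f remove J \ S from J one element at a time, leaving
   e(f(ê_{J ∩ S})) <= e(f(ê_S)) by monotonicity. *)

Lemma finset_ind (T : finType) (Q : {set T} -> Prop) :
  Q set0 -> (forall (k : T) (S : {set T}), k \notin S -> Q S -> Q (k |: S)) ->
  forall S, Q S.
Proof.
move=> Q0 QU S; elim: {S}#|S| {-2}S (erefl #|S|) => [|m IH] S cardS.
  by move/eqP: cardS; rewrite cards_eq0 => /eqP->.
have [k kS] : exists k, k \in S by apply/set0Pn; rewrite -card_gt0 cardS.
rewrite -(setD1K kS); apply: QU; first by rewrite !inE eqxx.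
by apply: IH; move: cardS; rewrite (cardsD1 k) kS => -[].
Qed.

Lemma le_by_minterms (d : Order.disp_t) (B : ctbDistrLatticeType d)
    (I : finType) (c : I -> B) (P : {set I}) (x y : B) :
  (forall S : {set I}, S \subset P ->
     x `&` \meet_(i in S) c i `&` \meet_(i in P :\: S) ~` c i <= y) ->
  x <= y.
Proof.
elim/finset_ind: P x => [|k P kP IH] x minterm_le.
  by have := minterm_le set0 (sub0set _); rewrite setD0 !big_set0 !meetx1.
rewrite -[x]meetx1 -(joinxC (c k)) meetUr leUx.
apply/andP; split; apply: IH => S SP; have kS := contra (subsetP SP k) kP.
- have -> : P :\: S = (k |: P) :\: (k |: S).
    apply/setP => i; rewrite !inE.
    by case: (i =P k) => [->|]; rewrite ?(negPf kP) ?andbF.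
  apply: le_trans (minterm_le _ (setUS _ SP)).
  by rewrite big_setU1 //= !meetA.
- have := minterm_le _ (subset_trans SP (subsetUr _ _)).
  have -> : (k |: P) :\: S = k |: (P :\: S).
    by apply/setP => i; rewrite !inE; case: (i =P k) => [->|]; rewrite ?kS.
  rewrite big_setU1 ?inE ?(negPf kP) ?andbF //=.
  by apply: le_trans; rewrite !meetA [x `&` ~` c k `&` _]meetAC.
Qed.

Lemma join_morph_homo (d1 d2 : Order.disp_t)
    (L1 : latticeType d1) (L2 : latticeType d2) (e : L1 -> L2) :
  {morph e : x y / x `|` y} -> {homo e : x y / x <= y}.
Proof. by move=> e_join x y /join_idPr <-; rewrite e_join leUl. Qed.

Lemma meet_compl_le_setD (dL dB : Order.disp_t) (L : latticeType dL)
    (B : ctbDistrLatticeType dB) (e : L -> B) (T : finType)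
    (b : T -> L) (g : {set T} -> L) :
  {morph e : x y / x `|` y} ->
  (forall K (k : T), g K <= g (K :\ k) `|` b k) ->
  forall K (R : {set T}),
    e (g K) `&` \meet_(i in R) ~` e (b i) <= e (g (K :\: R)).
Proof.
move=> e_join g_le K; elim/finset_ind => [|k R kR IH].
  by rewrite big_set0 meetx1 setD0.
rewrite big_setU1 //= meetCA; apply: le_trans (leI2 (lexx _) IH) _.
have := join_morph_homo e_join (g_le (K :\: R) k).
rewrite e_join setDDl setUC => /(leI2 (lexx (~` e (b k)))) /le_trans; apply.
by rewrite meetUr meetCx joinx0 leIr.
Qed.

Theorem lemma3p4
  (dL : Order.disp_t) (L : distrLatticeType dL)
  (dB : Order.disp_t) (B : ctbDistrLatticeType dB)
  (e : L -> B) (e_inj : injective e)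
  (e_meet : forall x y, e (x `&` y) = e x `&` e y)
  (e_join : forall x y, e (x `|` y) = e x `|` e y)
  (e_gen : generates e)
  (n : nat) (hn : (0 < n)%N)
  (a b : 'I_n -> L) (hab : forall i, a i < b i)
  (f : ('I_n -> L) -> L)
  (f_mono : forall I J : {set 'I_n}, I \subset J ->
              f (ehat a b I) <= f (ehat a b J))
  (f_cond : forall (I : {set 'I_n}) (k : 'I_n),
      f (ehat a b (k |: I)) `&` a k <= f (ehat a b I) /\
      f (ehat a b I) <= f (ehat a b (I :\ k)) `|` b k) :
  forall J : {set 'I_n},
    e (f (ehat a b J)) <= pminus e a b f (fun i => e (ehat a b J i)).
Proof.
move=> J; set x := fun i => e (ehat a b J i).
have e_homo := join_morph_homo e_join.
have a_le_x i : e (a i) <= x i.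
  by rewrite /x /ehat; case: ifP => _ //; exact/e_homo/ltW.
have x_J i : i \in J -> x i = e (b i) by rewrite /x /ehat => ->.
have le_f_setD := meet_compl_le_setD e_join (fun K k => proj2 (f_cond K k)) J.
apply: (le_by_minterms (c := x) (P := setT)) => S _; rewrite setTD.
apply: le_trans (joins_sup (j := S) _ isT); rewrite /cminus !lexI -andbA.
apply/and3P; split.
- have JS_sub : J :\: (J :\: S) \subset S.
    by rewrite setDDr setDv set0U subsetIr.
  apply: le_trans (e_homo _ _ (f_mono _ _ JS_sub)).
  apply: le_trans (le_f_setD _).
  rewrite -meetA leI2 // leIxr //.
  apply/meetsP => i; rewrite !inE => /andP[iS iJ].
  by rewrite -x_J //; apply: meets_inf; rewrite inE.
- apply: leIxr; apply/meetsP => i iS.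
  by apply: (meets_max (j := i)); rewrite ?inE // leC.
- exact: leIxl (leIr _ _).
Qed.
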